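(* Let $x_v\geq0$ for $v\in\Lambda_N$ and let $\check h_v=h_v+x_v$ for $v\in\Lambda_N$. Then with probability 1, for every $v\in\mathcal C^{\Lambda_N}\cap\check{\mathcal C}^{\Lambda_N}$ there is a nearest-neighbor path in $\mathcal C^{\Lambda_N}\cap\check{\mathcal C}^{\Lambda_N}$ joining $v$ and $\partial\Lambda_N$ (i.e. starting at $v$ and ending at a vertex adjacent to $\partial\Lambda_N$).
   Context: Let $\{h_v:v\in\mathbb Z^2\}$ be i.i.d. Gaussian with mean zero and variance $\epsilon^2>0$. Write $u\sim v$ if $|u-v|_1=1$; $\partial A=\{v\in\mathbb Z^2\setminus A:u\sim v\text{ for some }u\in A\}$; $\Lambda_N=\{v\in\mathbb Z^2:|v|_\infty\le N\}$. For a field $g$ on $\Lambda_N$ and $\sigma\in\{-1,1\}^{\Lambda_N}$, $H^{\Lambda_N,\pm}_g(\sigma)=-\big(\sum_{u\sim v,\,u,v\in\Lambda_N}\sigma_u\sigma_v\pm\sum_{u\sim v,\,u\in\Lambda_N,v\in\partial\Lambda_N}\sigma_u+\sum_{u\in\Lambda_N}\sigma_ug_u\big)$ (each unordered pair counted once); $\sigma^{\Lambda_N,\pm}$ and $\check\sigma^{\Lambda_N,\pm}$ are the ground states (minimizers) for $g=h$ and $g=\check h$ respectively (unique a.s.). $\mathcal C^{\Lambda_N}=\{v:\sigma^{\Lambda_N,+}_v=1,\sigma^{\Lambda_N,-}_v=-1\}$ and $\check{\mathcal C}^{\Lambda_N}=\{v:\check\sigma^{\Lambda_N,+}_v=1,\check\sigma^{\Lambda_N,-}_v=-1\}$.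 *)

From HB Require Import structures.
From mathcomp Require Import all_boot all_order all_algebra.
From mathcomp Require Import all_classical all_reals all_analysis.
Set Implicit Arguments. Unset Strict Implicit. Unset Printing Implicit Defensive.
Import Order.TTheory GRing.Theory Num.Theory.
Local Open Scope classical_set_scope.
Local Open Scope ring_scope.

Definition vtx := (int * int)%type.

Definition adj (u v : vtx) : bool := `|u.1 - v.1| + `|u.2 - v.2| == 1.

Definition inLambda (N : nat) (v : vtx) : bool :=
  (`|v.1| <= N%:Z) && (`|v.2| <= N%:Z).

Definition rangeZ (N : nat) : seq int :=
  [seq (k%:Z - N%:Z) | k <- iota 0 (N.*2.+1)].
Definition Lambda (N : nat) : seq vtx :=
  [seq (i, j) | i <- rangeZ N, j <- rangeZ N].

Definition nbrs (u : vtx) : seq vtx :=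
  [:: (u.1 + 1, u.2); (u.1 - 1, u.2); (u.1, u.2 + 1); (u.1, u.2 - 1)].

Definition inBoundary (N : nat) (v : vtx) : bool :=
  ~~ inLambda N v && has (fun u => adj u v) (Lambda N).

(* spin configurations: true = +1, false = -1 (only values on Lambda_N matter) *)
Definition spin (R : ringType) (b : bool) : R := if b then 1 else -1.

(* H^{Lambda_N, +/-}_g(sigma); pm = true for "+", false for "-".
   The nearest-neighbour sum over unordered pairs is written as half the sum
   over ordered pairs. *)
Definition hamiltonian (R : realType) (N : nat) (pm : bool) (g : vtx -> R)
    (sigma : vtx -> bool) : R :=
  - ( 2^-1 * (\sum_(u <- Lambda N) \sum_(v <- Lambda N | adj u v)
                 spin R (sigma u) * spin R (sigma v))
      + spin R pm * (\sum_(u <- Lambda N)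
                        \sum_(v <- nbrs u | inBoundary N v && adj u v)
                           spin R (sigma u))
      + \sum_(u <- Lambda N) spin R (sigma u) * g u ).

Definition ground_state (R : realType) (N : nat) (pm : bool) (g : vtx -> R)
    (sigma : vtx -> bool) : Prop :=
  forall tau : vtx -> bool, hamiltonian N pm g sigma <= hamiltonian N pm g tau.

Definition disagree (N : nat) (sp sm : vtx -> bool) (v : vtx) : bool :=
  [&& inLambda N v, sp v & ~~ sm v].

Definition path_to_boundary (N : nat) (S : vtx -> bool) (v : vtx) : Prop :=
  exists p : seq vtx,
    [/\ path adj v p, all S (v :: p) &
        exists w, adj (last v p) w && inBoundary N w].

Definition iid_gaussian (R : realType) d (T : measurableType d)
    (P : probability T R) (h : vtx -> {RV P >-> R}) (eps : R) : Prop :=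
  (forall v (B : set R), measurable B ->
      P (h v @^-1` B) = normal_prob 0 eps B)
  /\ (forall (S : seq vtx) (B : vtx -> set R), uniq S ->
      (forall v, measurable (B v)) ->
      P (\bigcap_(v in [set` S]) (h v @^-1` B v)) =
      (\prod_(v <- S) P (h v @^-1` B v))%E).
Arguments iid_gaussian {R d T} P h eps.

From HB Require Import structures.
From mathcomp Require Import all_boot all_order all_algebra.
From mathcomp Require Import all_classical all_reals all_analysis.
From mathcomp Require Import measurable_realfun zify ring lra.
Set Implicit Arguments. Unset Strict Implicit. Unset Printing Implicit Defensive.
Import Order.TTheory GRing.Theory Num.Theory.
Local Open Scope classical_set_scope.
Local Open Scope ring_scope.

(* Let s minimize H^{b1}_{g1} uniquely and t minimize H^{b2}_{g2}, and let D be a set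
   of sites where s = + and t = -, with g1 <= g2 on D and no other such site adjacent
   to D.  Setting s to - and t to + on D does not increase H(s) + H(t) as long as
   b1 <= b2 or D avoids the boundary, so D is empty.  With D = {s = +, t = -} this
   shows that ground states increase with the field.  With D the cluster of v in
   C ∩ Č, where σ^+ = + and the perturbed σ^- = -, monotonicity makes D isolated, so
   D must reach the boundary.
   Ground states are a.s. unique: the energies of two configurations that differ on
   Λ_N differ by a nonconstant affine function of the Gaussian field, whose level sets
   are null.  Indeed, cut all coordinates but one into cells of size del; on each cell
   the level set confines the remaining coordinate to a window of width O(del), where
   its density is bounded. *)

Lemma mem_rangeZ (N : nat) (z : int) : (z \in rangeZ N) = (`|z| <= N%:Z).
Proof.
apply/mapP/idP => [[k]|zN]; first by rewrite mem_iota add0n => /andP[_ kN] ->; lia.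
by exists (absz (z + N%:Z)); [rewrite mem_iota add0n; lia | lia].
Qed.

Lemma mem_Lambda (N : nat) (u : vtx) : (u \in Lambda N) = inLambda N u.
Proof.
apply/allpairsP/idP => [[[i j] /= [iN jN ->]]|].
  by rewrite /inLambda /= -!mem_rangeZ iN jN.
by case: u => i j /andP[/= iN jN]; exists (i, j); rewrite /= !mem_rangeZ.
Qed.

Lemma uniq_Lambda (N : nat) : uniq (Lambda N).
Proof.
have uniq_rangeZ : uniq (rangeZ N).
  by rewrite map_inj_uniq ?iota_uniq // => k1 k2 /addIr [].
by apply: allpairs_uniq => // -[i1 j1] [i2 j2] _ _ /= [-> ->].
Qed.

Lemma adjC : symmetric adj.
Proof. by move=> u v; rewrite /adj distrC [`|u.2 - _|]distrC. Qed.

Lemma spin_le (R : realType) (b1 b2 : bool) : b1 ==> b2 -> spin R b1 <= spin R b2.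
Proof. by case: b1; case: b2; rewrite /spin //= => _; lra. Qed.

Lemma spin_inj (R : realType) : injective (spin R).
Proof. by move=> [] [] //; rewrite /spin => e; exfalso; lra. Qed.

Section Hamiltonian.
Variables (R : realType) (N : nat).
Implicit Types (pm : bool) (g : vtx -> R) (s t : vtx -> bool).

Lemma eq_hamiltonian pm g s t : (forall u, inLambda N u -> s u = t u) ->
  hamiltonian N pm g s = hamiltonian N pm g t.
Proof.
move=> st; have {}st u : u \in Lambda N -> s u = t u by rewrite mem_Lambda; apply: st.
rewrite /hamiltonian; congr (- (_ * _ + _ * _ + _)).
- rewrite big_seq [RHS]big_seq; apply: eq_bigr => u uL.
  rewrite big_seq_cond [RHS]big_seq_cond; apply: eq_bigr => v /andP[vL _].
  by rewrite !st.
- rewrite big_seq [RHS]big_seq; apply: eq_bigr => u uL.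
  by apply: eq_bigr => v _; rewrite st.
- by rewrite big_seq [RHS]big_seq; apply: eq_bigr => u uL; rewrite st.
Qed.

Lemma hamiltonian_field pm g s : hamiltonian N pm g s =
  hamiltonian N pm (fun=> 0) s - \sum_(u <- Lambda N) spin R (s u) * g u.
Proof.
rewrite /hamiltonian.
have -> : \sum_(u <- Lambda N) spin R (s u) * 0 = 0.
  by rewrite big1 // => u _; rewrite mulr0.
by rewrite addr0 opprD.
Qed.

Definition unique_ground_state pm g s : Prop :=
  forall t, hamiltonian N pm g t <= hamiltonian N pm g s ->
    forall u, inLambda N u -> t u = s u.

Definition generic_field pm g : Prop :=
  forall s t, (exists2 u, inLambda N u & s u != t u) ->
    hamiltonian N pm g s != hamiltonian N pm g t.

Lemma generic_ground_state_unique pm g s :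
  generic_field pm g -> ground_state N pm g s -> unique_ground_state pm g s.
Proof.
move=> gen gs t ts u uL; apply/eqP; apply: contraT => tsu.
by have := gen t s (ex_intro2 _ _ u uL tsu); rewrite eq_le ts gs.
Qed.

End Hamiltonian.

Section Flip.
Variables (R : realType) (N : nat).

Lemma spin_edge_flip_le (du dv su sv tu tv : bool) :
  (du -> su && ~~ tu) -> (dv -> sv && ~~ tv) ->
  (du -> ~~ dv -> ~~ (sv && ~~ tv)) -> (dv -> ~~ du -> ~~ (su && ~~ tu)) ->
  spin R su * spin R sv + spin R tu * spin R tv <=
  spin R (su && ~~ du) * spin R (sv && ~~ dv) + spin R (tu || du) * spin R (tv || dv).
Proof.
case: du; case: dv; case: su; case: sv; case: tu; case: tv => /= H1 H2 H3 H4;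
  rewrite /spin; try lra;
  first [by move: (H1 erefl) | by move: (H2 erefl) | by move: (H3 erefl erefl)
        | by move: (H4 erefl erefl)].
Qed.

Lemma spin_site_flip_le (du su tu : bool) (c1 c2 : R) :
  (du -> su && ~~ tu) -> (du -> c1 <= c2) ->
  c1 * spin R su + c2 * spin R tu <= c1 * spin R (su && ~~ du) + c2 * spin R (tu || du).
Proof.
case: du => [/(_ erefl)/andP[-> /negbTE ->] /(_ erefl) c12 | _ _] /=;
  rewrite ?andbT ?orbF /spin; lra.
Qed.

Variables (b1 b2 : bool) (g1 g2 : vtx -> R) (s t D : vtx -> bool).
Hypothesis s_uniq : unique_ground_state N b1 g1 s.
Hypothesis t_gs : ground_state N b2 g2 t.
Hypothesis D_sub : forall u, D u -> s u && ~~ t u.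
Hypothesis D_field : forall u, inLambda N u -> D u -> g1 u <= g2 u.
Hypothesis D_isolated : forall u v, inLambda N u -> inLambda N v -> adj u v ->
  D u -> ~~ D v -> ~~ (s v && ~~ t v).
Hypothesis D_boundary : forall u v, inLambda N u -> D u -> inBoundary N v -> adj u v ->
  b1 ==> b2.

Lemma hamiltonian_flip_le :
  hamiltonian N b1 g1 (fun u => s u && ~~ D u) + hamiltonian N b2 g2 (fun u => t u || D u)
  <= hamiltonian N b1 g1 s + hamiltonian N b2 g2 t.
Proof.
have edges :
  \sum_(u <- Lambda N) \sum_(v <- Lambda N | adj u v) spin R (s u) * spin R (s v)
  + \sum_(u <- Lambda N) \sum_(v <- Lambda N | adj u v) spin R (t u) * spin R (t v) <=
  \sum_(u <- Lambda N) \sum_(v <- Lambda N | adj u v)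
     spin R (s u && ~~ D u) * spin R (s v && ~~ D v)
  + \sum_(u <- Lambda N) \sum_(v <- Lambda N | adj u v)
     spin R (t u || D u) * spin R (t v || D v).
  rewrite -!big_split /= big_seq [leRHS]big_seq; apply: ler_sum => u.
  rewrite mem_Lambda => uL; rewrite -!big_split /= big_seq_cond [leRHS]big_seq_cond.
  apply: ler_sum => v /andP[]; rewrite mem_Lambda => vL uv.
  apply: spin_edge_flip_le => [||Du nDv|Dv nDu]; try exact: D_sub.
    exact: D_isolated uL vL uv Du nDv.
  by apply: D_isolated vL uL _ Dv nDu; rewrite adjC.
have boundary :
  spin R b1 * (\sum_(u <- Lambda N)
     \sum_(v <- nbrs u | inBoundary N v && adj u v) spin R (s u))
  + spin R b2 * (\sum_(u <- Lambda N)
     \sum_(v <- nbrs u | inBoundary N v && adj u v) spin R (t u)) <=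
  spin R b1 * (\sum_(u <- Lambda N)
     \sum_(v <- nbrs u | inBoundary N v && adj u v) spin R (s u && ~~ D u))
  + spin R b2 * (\sum_(u <- Lambda N)
     \sum_(v <- nbrs u | inBoundary N v && adj u v) spin R (t u || D u)).
  rewrite !big_distrr -!big_split /= big_seq [leRHS]big_seq; apply: ler_sum => u.
  rewrite mem_Lambda => uL; rewrite !big_distrr -!big_split /= big_seq_cond.
  rewrite [leRHS]big_seq_cond; apply: ler_sum => v /andP[_ /andP[vB uv]].
  apply: spin_site_flip_le => [|Du]; first exact: D_sub.
  exact/spin_le/(D_boundary uL Du vB uv).
have field :
  \sum_(u <- Lambda N) spin R (s u) * g1 u + \sum_(u <- Lambda N) spin R (t u) * g2 u <=
  \sum_(u <- Lambda N) spin R (s u && ~~ D u) * g1 u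
  + \sum_(u <- Lambda N) spin R (t u || D u) * g2 u.
  rewrite -!big_split /= big_seq [leRHS]big_seq; apply: ler_sum => u.
  rewrite mem_Lambda => uL; rewrite ![spin R _ * _]mulrC.
  apply: spin_site_flip_le => [|Du]; first exact: D_sub.
  exact: D_field.
have half_ge0 : 0 <= 2^-1 :> R by rewrite invr_ge0.
have := ler_wpM2l half_ge0 edges; rewrite /hamiltonian; lra.
Qed.

Lemma flip_set_empty u : inLambda N u -> ~~ D u.
Proof.
move=> uL; apply/negP => Du.
have s'_le : hamiltonian N b1 g1 (fun u => s u && ~~ D u) <= hamiltonian N b1 g1 s.
  by have := t_gs (fun u => t u || D u); have := hamiltonian_flip_le; lra.
have := s_uniq s'_le uL; rewrite Du andbF.
by case/andP: (D_sub Du) => ->.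
Qed.

End Flip.

Definition reachable (S : vtx -> bool) (v u : vtx) : Prop :=
  exists p, [/\ path adj v p, all S (v :: p) & last v p = u].

Lemma reachable_refl (S : vtx -> bool) v : S v -> reachable S v v.
Proof. by move=> Sv; exists [::]; rewrite /= Sv. Qed.

Lemma reachable_mem (S : vtx -> bool) v u : reachable S v u -> S u.
Proof. by move=> [p [_ /allP Sp <-]]; apply/Sp/mem_last. Qed.

Lemma reachable_step (S : vtx -> bool) v u w :
  reachable S v u -> adj u w -> S w -> reachable S v w.
Proof.
move=> [p [vp Sp <-]] uw Sw; exists (rcons p w).
by rewrite rcons_path vp uw -rcons_cons all_rcons Sw Sp last_rcons.
Qed.

Lemma reachable_boundary N (S : vtx -> bool) v u w :
  reachable S v u -> adj u w -> inBoundary N w -> path_to_boundary N S v.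
Proof. by move=> [p [vp Sp pu]] uw wB; exists p; split => //; exists w; rewrite pu uw. Qed.

Section Clusters.
Variables (R : realType) (N : nat).

Lemma ground_state_mono pm (g1 g2 : vtx -> R) (s t : vtx -> bool) :
  unique_ground_state N pm g1 s -> ground_state N pm g2 t ->
  (forall u, inLambda N u -> g1 u <= g2 u) ->
  forall u, inLambda N u -> s u -> t u.
Proof.
move=> s_uniq t_gs g12 u uL su; apply: contraT => ntu.
pose D w := [&& inLambda N w, s w & ~~ t w].
have D_sub w : D w -> s w && ~~ t w by case/and3P => _ -> ->.
have D_field w : inLambda N w -> D w -> g1 w <= g2 w by move=> wL _; apply: g12.
have D_isolated w w' : inLambda N w -> inLambda N w' -> adj w w' ->
    D w -> ~~ D w' -> ~~ (s w' && ~~ t w').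
  by move=> _ w'L _ _; rewrite /D w'L.
have D_boundary w w' : inLambda N w -> D w -> inBoundary N w' -> adj w w' -> pm ==> pm.
  by rewrite implybb.
have := flip_set_empty s_uniq t_gs D_sub D_field D_isolated D_boundary uL.
by rewrite /D uL su ntu.
Qed.

Lemma disagreement_cluster_touches_boundary (g x : vtx -> R)
    (sp sm csp csm : vtx -> bool) :
  (forall v, inLambda N v -> 0 <= x v) ->
  unique_ground_state N true g sp -> unique_ground_state N false g sm ->
  ground_state N true (fun v => g v + x v) csp ->
  ground_state N false (fun v => g v + x v) csm ->
  let S := fun v => disagree N sp sm v && disagree N csp csm v in
  forall v, S v -> path_to_boundary N S v.
Proof.
move=> x_ge0 sp_uniq sm_uniq csp_gs csm_gs S v Sv.
have g_le u : inLambda N u -> g u <= g u + x u by move=> uL; rewrite lerDl x_ge0.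
have sp_csp := ground_state_mono sp_uniq csp_gs g_le.
have sm_csm := ground_state_mono sm_uniq csm_gs g_le.
have S_sub u : S u -> [/\ inLambda N u, sp u & ~~ csm u].
  by case/andP => /and3P[-> -> _] /and3P[_ _ ->].
apply: contrapT => no_path.
pose D u := `[< reachable S v u >].
have D_sub u : D u -> sp u && ~~ csm u.
  by move=> /asboolP/reachable_mem/S_sub[_ -> ->].
have D_field u : inLambda N u -> D u -> g u <= g u + x u by move=> uL _; apply: g_le.
have D_isolated u w : inLambda N u -> inLambda N w -> adj u w ->
    D u -> ~~ D w -> ~~ (sp w && ~~ csm w).
  move=> _ wL uw /asboolP vu /asboolP vw; apply/negP => /andP[spw ncsmw].
  apply/vw/(reachable_step vu uw).
  by rewrite /S /disagree wL spw sp_csp //= (contra (sm_csm w wL) ncsmw) ncsmw.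
have D_boundary u w : inLambda N u -> D u -> inBoundary N w -> adj u w -> true ==> false.
  by move=> _ /asboolP vu wB uw; case: no_path; apply: reachable_boundary vu uw wB.
have [vL _ _] := S_sub v Sv.
case/negP: (flip_set_empty sp_uniq csm_gs D_sub D_field D_isolated D_boundary vL).
exact/asboolP/reachable_refl.
Qed.

End Clusters.

Section Cells.
Variable R : realType.

Definition cell (del : R) (k : int) : set R :=
  [set` `[k%:~R * del, (k + 1)%:~R * del[%R].

Lemma cellP del k y : cell del k y = (k%:~R * del <= y < (k + 1)%:~R * del).
Proof. by rewrite /cell /= in_itv. Qed.

Lemma cell_floor del y : 0 < del -> cell del (Num.floor (y / del)) y.
Proof.
move=> del_gt0; rewrite cellP; apply/andP; split.
  by rewrite -ler_pdivlMr //; exact: floor_le.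
by rewrite -ltr_pdivrMr // -floor_lt_int ltzD1.
Qed.

Lemma cell_unique del k k' y : 0 < del -> cell del k y -> cell del k' y -> k = k'.
Proof.
move=> del_gt0; rewrite !cellP => /andP[k_le k_gt] /andP[k'_le k'_gt].
have kk' : k < k' + 1.
  by rewrite -(ltr_int R) -(ltr_pM2r del_gt0); apply: le_lt_trans k_le k'_gt.
have k'k : k' < k + 1.
  by rewrite -(ltr_int R) -(ltr_pM2r del_gt0); apply: le_lt_trans k'_le k_gt.
by apply/eqP; rewrite eq_le -!ltzD1 kk' k'k.
Qed.

End Cells.

Lemma normal_prob_itv_le (R : realType) (eps m r : R) : eps != 0 -> 0 <= r ->
  (normal_prob 0 eps [set` `[m - r, m + r]%R] <= (normal_peak eps * (r *+ 2))%:E)%E.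
Proof.
move=> eps_neq0 r_ge0; rewrite /normal_prob.
apply: (@le_trans _ _ (\int[lebesgue_measure]_(x in [set` `[m - r, m + r]%R])
    (cst (normal_peak eps)%:E) x))%E.
  apply: ge0_le_integral => //=.
  all: try (by move=> x _; rewrite lee_fin normal_pdf_ge0).
  all: try (by move=> x _; rewrite lee_fin normal_pdf_ub).
  apply/measurable_EFinP.
  exact: (measurable_funTS (measurable_normal_pdf 0 eps)).
rewrite (@integral_cst _ _ _ lebesgue_measure) //= lebesgue_measure_itv /=.
case: ifPn => _; last by rewrite mule0 lee_fin mulr_ge0 ?normal_peak_ge0 ?mulrn_wge0.
by rewrite -EFinD lee_fin ler_wpM2l ?normal_peak_ge0 //; lra.
Qed.

Section LevelSet.
Variables (R : realType) (d : measure_display) (T : measurableType d)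
  (P : probability T R) (h : vtx -> {RV P >-> R}) (eps : R).
Hypothesis eps_gt0 : 0 < eps.
Hypothesis h_iid : iid_gaussian P h eps.
Variables (u0 : vtx) (L : seq vtx) (a : vtx -> R) (a0 c : R).
Hypothesis u0_notin_L : u0 \notin L.
Hypothesis L_uniq : uniq L.
Hypothesis a0_neq0 : a0 != 0.

Definition level_set : set T := [set w | a0 * h u0 w + \sum_(v <- L) a v * h v w = c].

(* On [box del j] the level set confines [h u0] to [window del j]; the size test
   makes boxes with distinct [j] disjoint. *)
Definition box del (j : seq int) : set T :=
  if size j == size L
  then \bigcap_(v in [set` L]) (h v @^-1` cell del (nth 0 j (index v L)))
  else set0.

Definition window_center del j :=
  (c - \sum_(v <- L) a v * ((nth 0 j (index v L))%:~R * del)) / a0.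
Definition window_radius del := (\sum_(v <- L) `|a v|) * del / `|a0|.
Definition window del j : set R :=
  [set` `[window_center del j - window_radius del,
          window_center del j + window_radius del]].

Definition box_seq del n := if pickle_inv n is Some j then box del j else set0.
Definition piece_seq del n :=
  if pickle_inv n is Some j then box del j `&` (h u0 @^-1` window del j) else set0.

Lemma measurable_level_set : measurable level_set.
Proof.
have mf : measurable_fun setT (fun w => a0 * h u0 w + \sum_(v <- L) a v * h v w).
  apply: measurable_funD; first by apply: measurable_funM => //; apply: measurable_funPT.
  by apply: measurable_sum => v; apply: measurable_funM => //; apply: measurable_funPT.
by have := mf measurableT [set c] (measurable_set1 c); rewrite setTI.
Qed.

Lemma measurable_box del j : measurable (box del j).
Proof.
rewrite /box; case: ifP => _ //.
apply: fin_bigcap_measurable; first exact: finite_seq.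
by move=> v _; apply: measurable_funPTI; exact: measurable_itv.
Qed.

Lemma window_radius_ge0 del : 0 < del -> 0 <= window_radius del.
Proof.
move=> del_gt0; rewrite /window_radius !mulr_ge0 ?invr_ge0 ?sumr_ge0 //.
exact: ltW.
Qed.

Lemma level_set_window del j w : 0 < del ->
  box del j w -> level_set w -> window del j (h u0 w).
Proof.
move=> del_gt0; rewrite /box; case: ifP => // _ jw hw.
rewrite /window /= in_itv /= -ler_distl.
have h0E : h u0 w = (c - \sum_(v <- L) a v * h v w) / a0 by rewrite -hw; field.
have -> : h u0 w - window_center del j =
    (\sum_(v <- L) a v * ((nth 0 j (index v L))%:~R * del - h v w)) / a0.
  rewrite (eq_bigr (fun v => a v * ((nth 0 j (index v L))%:~R * del) - a v * h v w));
    last by move=> v _; rewrite mulrBr.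
  by rewrite sumrB h0E /window_center; field.
rewrite normrM normrV ?unitfE // /window_radius.
rewrite ler_wpM2r ?invr_ge0 //; apply: le_trans (ler_norm_sum _ _ _) _.
rewrite big_distrl /= big_seq [leRHS]big_seq; apply: ler_sum => v vL.
rewrite normrM ler_wpM2l //.
have := jw v vL; rewrite /= cellP intrD mulrDl mul1r => /andP[lo hi].
by rewrite ler_norml; apply/andP; split; lra.
Qed.

Lemma level_set_sub_pieces del : 0 < del -> level_set `<=` \bigcup_n piece_seq del n.
Proof.
move=> del_gt0 w hw.
pose j := map (fun v => Num.floor (h v w / del)) L.
have jw : box del j w.
  rewrite /box size_map eqxx => v /= vL.
  by rewrite (nth_map v) ?index_mem // nth_index //; exact: cell_floor.
exists (pickle j) => //; rewrite /piece_seq pickleK_inv; split => //.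
exact: level_set_window.
Qed.

Lemma trivIset_box_seq del : 0 < del -> trivIset setT (box_seq del).
Proof.
move=> del_gt0 i k _ _ [w []]; rewrite /box_seq.
case ei: (@pickle_inv (seq int) i) => [ji|] //.
case ek: (@pickle_inv (seq int) k) => [jk|] // jiw jkw.
have := @pickle_invK (seq int) i; have := @pickle_invK (seq int) k.
rewrite ei ek /= => <- <-; congr pickle.
move: jiw jkw; rewrite /box; case: eqP => // si; case: eqP => // sk jiw jkw.
apply: (@eq_from_nth _ 0) => [|q]; first by rewrite si sk.
rewrite si => qL; have vL := mem_nth u0 qL.
have := jiw _ vL; have := jkw _ vL; rewrite /= index_uniq //.
by move=> /cell_unique/[apply] ->.
Qed.

Lemma measure_piece_le del n : 0 < del ->
  (P (piece_seq del n) <=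
   (normal_peak eps * (window_radius del *+ 2))%:E * P (box_seq del n))%E.
Proof.
move=> del_gt0; rewrite /piece_seq /box_seq.
case: (pickle_inv n) => [j|]; last by rewrite measure0 mule0.
have [sj|sj] := eqVneq (size j) (size L); last first.
  by rewrite /box (negbTE sj) set0I measure0 mule0.
pose B v := if v == u0 then window del j else cell del (nth 0 j (index v L)).
have mB v : measurable (B v) by rewrite /B; case: ifP => _; exact: measurable_itv.
have vu0 v : v \in L -> (v == u0) = false.
  by move=> vL; apply/negbTE; apply: contraNneq u0_notin_L => <-.
have pieceE : box del j `&` h u0 @^-1` window del j =
    \bigcap_(v in [set` u0 :: L]) (h v @^-1` B v).
  rewrite /box sj eqxx; apply/seteqP; split => w.
    move=> [jw hw] v /=; rewrite in_cons => /orP[/eqP ->|vL]; rewrite /B.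
      by rewrite eqxx.
    by rewrite vu0 //; exact: jw.
  move=> Bw; split; last by have := Bw u0; rewrite /= mem_head /B eqxx; apply.
  by move=> v /= vL; have := Bw v; rewrite /= in_cons vL orbT /B vu0 //; apply.
have boxE : (\prod_(v <- L) P (h v @^-1` B v) = P (box del j))%E.
  rewrite /box sj eqxx (h_iid.2 L _ L_uniq (fun v => measurable_itv _)).
  by rewrite big_seq [RHS]big_seq; apply: eq_bigr => v vL; rewrite /B vu0.
have u0L_uniq : uniq (u0 :: L) by rewrite /= u0_notin_L L_uniq.
rewrite pieceE (h_iid.2 _ _ u0L_uniq mB) big_cons boxE.
rewrite /B eqxx lee_wpmul2r ?measure_ge0 // (h_iid.1 u0 _ (measurable_itv _)).
by apply: normal_prob_itv_le; [rewrite gt_eqF | exact: window_radius_ge0].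
Qed.

Lemma measure_level_set_le del : 0 < del ->
  (P level_set <= (normal_peak eps * (window_radius del *+ 2))%:E)%E.
Proof.
move=> del_gt0; set K := normal_peak eps * _.
have mpiece n : measurable (piece_seq del n).
  rewrite /piece_seq; case: pickle_inv => [j|] //; apply: measurableI.
    exact: measurable_box.
  by apply: measurable_funPTI; exact: measurable_itv.
have mbox n : measurable (box_seq del n).
  by rewrite /box_seq; case: pickle_inv => [j|] //; exact: measurable_box.
have K_ge0 : (0 <= K%:E)%E.
  by rewrite lee_fin mulr_ge0 ?normal_peak_ge0 ?mulrn_wge0 ?window_radius_ge0.
have boxes_le1 : (\sum_(n <oo) P (box_seq del n) <= 1)%E.
  rewrite (@eq_eseriesl _ _ (fun n => n \in [set: nat])); last by move=> n; rewrite in_setT.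
  rewrite -measure_bigcup //; last exact: trivIset_box_seq.
  by apply: probability_le1; exact: bigcup_measurable.
apply: le_trans (measure_sigma_subadditive P mpiece measurable_level_set
  (level_set_sub_pieces del_gt0)) _.
apply: (@le_trans _ _ (\sum_(n <oo) (K%:E * P (box_seq del n)))%E).
  apply: lee_nneseries => [n _ _|n _]; first exact: measure_ge0.
  exact: measure_piece_le.
rewrite nneseriesZl => [|n _]; last exact: measure_ge0.
by have := lee_wpmul2l K_ge0 boxes_le1; rewrite mule1.
Qed.

Lemma negligible_level_set : P.-negligible level_set.
Proof.
exists level_set; split => //; first exact: measurable_level_set.
apply/eqP; rewrite eq_le measure_ge0 andbT.
apply/lee_addgt0Pr => e e_gt0; rewrite add0e.
set S := \sum_(v <- L) `|a v|.
set K := normal_peak eps * (S / `|a0|) * 2.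
have K_ge0 : 0 <= K by rewrite !mulr_ge0 ?normal_peak_ge0 ?invr_ge0 ?sumr_ge0.
have K1_gt0 : 0 < K + 1 by lra.
have del_gt0 : 0 < e / (K + 1) by apply: divr_gt0.
apply: le_trans (measure_level_set_le del_gt0) _; rewrite lee_fin.
have -> : normal_peak eps * (window_radius (e / (K + 1)) *+ 2) = K * (e / (K + 1)).
  rewrite /K /window_radius -/S mulr2n; set z := `|a0|^-1.
  rewrite -[S * _ / `|a0|]/(S * _ * z) -[S / `|a0|]/(S * z); ring.
by rewrite mulrA ler_pdivrMr //; nra.
Qed.

End LevelSet.

Lemma ae_forall_countable d (T : measurableType d) (R : realType)
    (mu : {measure set T -> \bar R}) (I : countType) (Q : I -> T -> Prop) :
  (forall i, {ae mu, forall w, Q i w}) -> {ae mu, forall w, forall i, Q i w}.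
Proof.
move=> aeQ.
have aeQn n : {ae mu, forall w, forall i, pickle i = n -> Q i w}.
  case e: (@pickle_inv I n) => [i|]; last first.
    by apply: aeW => w j jn; move: e; rewrite -jn pickleK_inv.
  have := @pickle_invK I n; rewrite e /= => <-.
  by apply: filterS (aeQ i) => w Qi j /(pcan_inj pickleK_inv) ->.
by apply: filterS (ae_foralln aeQn) => w Qw i; apply: Qw.
Qed.

Section Genericity.
Variables (R : realType) (d : measure_display) (T : measurableType d)
  (P : probability T R) (h : vtx -> {RV P >-> R}) (eps : R).
Hypothesis eps_gt0 : 0 < eps.
Hypothesis h_iid : iid_gaussian P h eps.

Lemma negligible_affine_level_set (L : seq vtx) (u0 : vtx) (a : vtx -> R) (c : R) :
  uniq L -> u0 \in L -> a u0 != 0 ->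
  P.-negligible [set w | \sum_(u <- L) a u * h u w = c].
Proof.
move=> L_uniq u0L a0.
have L_perm := perm_to_rem u0L.
have /andP[u0_notin rem_uniq] : uniq (u0 :: rem u0 L) by rewrite -(perm_uniq L_perm).
apply: negligibleS (negligible_level_set eps_gt0 h_iid a c u0_notin rem_uniq a0).
by move=> w /=; rewrite (perm_big _ L_perm) big_cons.
Qed.

Lemma ae_hamiltonian_neq N pm (s t : vtx -> bool) :
  (exists2 u, inLambda N u & s u != t u) ->
  {ae P, forall w,
    hamiltonian N pm (fun v => h v w) s != hamiltonian N pm (fun v => h v w) t}.
Proof.
move=> [u0 u0L st0].
pose a u := spin R (s u) - spin R (t u).
have a0 : a u0 != 0 by rewrite subr_eq0 (inj_eq (@spin_inj R)).
have u0L' : u0 \in Lambda N by rewrite mem_Lambda.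
have := negligible_affine_level_set
  (hamiltonian N pm (fun=> 0) s - hamiltonian N pm (fun=> 0) t) (uniq_Lambda N) u0L' a0.
apply: negligibleS => w /= /negP; rewrite negbK.
rewrite [hamiltonian N pm _ s]hamiltonian_field [hamiltonian N pm _ t]hamiltonian_field.
move=> /eqP st.
have -> : \sum_(u <- Lambda N) a u * h u w =
    \sum_(u <- Lambda N) spin R (s u) * h u w - \sum_(u <- Lambda N) spin R (t u) * h u w.
  by rewrite -sumrB; apply: eq_bigr => u _; rewrite mulrBl.
lra.
Qed.

Lemma ae_generic_field N pm : {ae P, forall w, generic_field N pm (fun v => h v w)}.
Proof.
(* Configurations are encoded by their values along [Lambda N], which makes the
   family of pairs to compare countable. *)
pose cfg (s : seq bool) u := nth false s (index u (Lambda N)).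
have cfg_map (s : vtx -> bool) u : inLambda N u -> cfg (map s (Lambda N)) u = s u.
  by rewrite -mem_Lambda => uL; rewrite /cfg (nth_map u) ?index_mem // nth_index.
have ae_cfg (st : seq bool * seq bool) : {ae P, forall w,
    (exists2 u, inLambda N u & cfg st.1 u != cfg st.2 u) ->
    hamiltonian N pm (fun v => h v w) (cfg st.1) !=
    hamiltonian N pm (fun v => h v w) (cfg st.2)}.
  have [diff|same] := pselect (exists2 u, inLambda N u & cfg st.1 u != cfg st.2 u).
    by apply: filterS (ae_hamiltonian_neq pm diff) => w + _.
  by apply: aeW => w /same.
apply: filterS (ae_forall_countable ae_cfg) => w gen s t [u uL stu].
rewrite -(eq_hamiltonian _ _ (cfg_map s)) -(eq_hamiltonian _ _ (cfg_map t)).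
by apply: (gen (map s (Lambda N), map t (Lambda N))); exists u; rewrite ?cfg_map.
Qed.

End Genericity.

Theorem lemma2p5 (R : realType) (d : measure_display) (T : measurableType d)
    (P : probability T R) (h : vtx -> {RV P >-> R}) (eps : R) (N : nat)
    (x : vtx -> R) :
  0 < eps -> iid_gaussian P h eps ->
  (forall v, inLambda N v -> 0 <= x v) ->
  {ae P, forall omega,
    forall sp sm csp csm : vtx -> bool,
      ground_state N true (fun v => h v omega) sp ->
      ground_state N false (fun v => h v omega) sm ->
      ground_state N true (fun v => h v omega + x v) csp ->
      ground_state N false (fun v => h v omega + x v) csm ->
      let S := fun v => disagree N sp sm v && disagree N csp csm v in
      forall v, S v -> path_to_boundary N S v}.
Proof.
move=> eps_gt0 h_iid x_ge0.
move: (ae_generic_field eps_gt0 h_iid N true) (ae_generic_field eps_gt0 h_iid N false).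
apply: filterS2 => w gen_p gen_m sp sm csp csm sp_gs sm_gs csp_gs csm_gs.
apply: disagreement_cluster_touches_boundary csp_gs csm_gs => //.
- exact: generic_ground_state_unique gen_p sp_gs.
- exact: generic_ground_state_unique gen_m sm_gs.
Qed.
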